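(* Let $d\ge1$, $u\in\mathbb{C}\setminus\{0\}$, let $z,x_1,\ldots,x_{d-1}\in\mathbb{C}$ be the parameters of the Markov trace $\mathrm{tr}$, and $x_0=1$. For all $0\le m\le d-1$, $$\mathrm{tr}\big(e_1^{(m)}e_2\,g_{1,2}\big)=(u+1)z^2x_m+(u+2)z\,E^{(m)}+\mathrm{tr}\big(e_1^{(m)}e_2\big).$$
   Context: The Yokonuma–Hecke algebra $\mathrm{Y}_{d,n}(u)$ is the unital associative $\mathbb{C}$-algebra with generators $g_1,\ldots,g_{n-1},t_1,\ldots,t_n$ and relations: $g_ig_j=g_jg_i$ for $|i-j|>1$; $g_{i+1}g_ig_{i+1}=g_ig_{i+1}g_i$; $t_it_j=t_jt_i$; $t_i^d=1$; $g_it_i=t_{i+1}g_i$; $g_it_{i+1}=t_ig_i$; $g_it_j=t_jg_i$ for $j\ne i,i+1$; $g_i^2=1+(u-1)e_i+(u-1)e_ig_i$, where $e_i=\frac1d\sum_{s=0}^{d-1}t_i^st_{i+1}^{d-s}$; $\mathrm{Y}_{d,n}(u)\subset\mathrm{Y}_{d,n+1}(u)$ naturally. Also $e_i^{(m)}=\frac1d\sum_{s=0}^{d-1}t_i^{m+s}t_{i+1}^{d-s}$. For $w\in S_n$ with reduced expression $s_{i_1}\cdots s_{i_k}$ put $g_w=g_{i_1}\cdots g_{i_k}$, and $g_{1,2}=\sum_{w\in S_3}g_w\in\mathrm{Y}_{d,3}(u)$. For complex $z,x_1,\ldots,x_{d-1}$, $\mathrm{tr}$ is the unique linear map on $\bigcup_n\mathrm{Y}_{d,n}(u)$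 with $\mathrm{tr}(ab)=\mathrm{tr}(ba)$, $\mathrm{tr}(1)=1$, $\mathrm{tr}(ag_n)=z\,\mathrm{tr}(a)$, $\mathrm{tr}(at_{n+1}^s)=x_s\,\mathrm{tr}(a)$ for $a,b\in\mathrm{Y}_{d,n}(u)$. Indices of $x$ are taken mod $d$ and $E^{(m)}=\frac1d\sum_{s=0}^{d-1}x_{m+s}x_{d-s}$. *)

From mathcomp Require Import Rstruct.
From HB Require Import structures.
From mathcomp Require Import all_boot all_order all_algebra.
From mathcomp Require Import complex.
Set Implicit Arguments. Unset Strict Implicit. Unset Printing Implicit Defensive.
Import Order.TTheory GRing.Theory Num.Theory.
Local Open Scope ring_scope.

Notation CC := (complex Rdefinitions.R).

Section YH.
Variable A : algType CC.
Variables (d : nat) (u : CC).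
(* generators: g i (1 <= i <= n-1) and t i (1 <= i <= n); other indices unused *)
Variables (g t : nat -> A).

Definition yh_e (i : nat) : A :=
  (d%:R)^-1 *: \sum_(s < d) (t i ^+ s * t i.+1 ^+ (d - s)).

Definition yh_em (m i : nat) : A :=
  (d%:R)^-1 *: \sum_(s < d) (t i ^+ (m + s) * t i.+1 ^+ (d - s)).

Definition YH_rels (n : nat) : Prop :=
  (forall i j, (1 <= i <= n.-1)%N -> (1 <= j <= n.-1)%N -> (i.+1 < j \/ j.+1 < i)%N ->
         g i * g j = g j * g i) /\
      (forall i, (1 <= i)%N -> (i.+1 <= n.-1)%N ->
         g i.+1 * g i * g i.+1 = g i * g i.+1 * g i) /\
      (forall i j, (1 <= i <= n)%N -> (1 <= j <= n)%N -> t i * t j = t j * t i) /\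
      (forall i, (1 <= i <= n)%N -> t i ^+ d = 1) /\
      (forall i, (1 <= i <= n.-1)%N ->
         [/\ g i * t i = t i.+1 * g i,
             g i * t i.+1 = t i * g i &
             forall j, (1 <= j <= n)%N -> (j != i)%N -> (j != i.+1)%N -> g i * t j = t j * g i]) /\
      (forall i, (1 <= i <= n.-1)%N ->
         g i ^+ 2 = 1 + (u - 1) *: yh_e i + (u - 1) *: (yh_e i * g i)).

(* g_{1,2} = sum_{w in S_3} g_w ; the reduced words of S_3 are
   1, s1, s2, s1 s2, s2 s1, s1 s2 s1. *)
Definition yh_g12 : A :=
  1 + g 1 + g 2 + g 1 * g 2 + g 2 * g 1 + g 1 * g 2 * g 1.

(* The subalgebra Y_{d,k} of A generated by g_1..g_{k-1}, t_1..t_k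
   (for k = 0 this is C.1). *)
Inductive yh_sub (k : nat) : A -> Prop :=
  | yh_sub1 : yh_sub k 1
  | yh_subg i : (1 <= i < k)%N -> yh_sub k (g i)
  | yh_subt i : (1 <= i <= k)%N -> yh_sub k (t i)
  | yh_subD a b : yh_sub k a -> yh_sub k b -> yh_sub k (a + b)
  | yh_subZ (c : CC) a : yh_sub k a -> yh_sub k (c *: a)
  | yh_subM a b : yh_sub k a -> yh_sub k b -> yh_sub k (a * b).

End YH.

(* (A, g, t) is the algebra Y_{d,n}(u) presented by the generators and
   relations above: the relations hold, and it is universal among
   C-algebras with elements satisfying them. *)
Definition is_YH (A : algType CC) (d : nat) (u : CC) (n : nat) (g t : nat -> A) :
  Prop :=
  YH_rels d u g t n /\
  forall (B : algType CC) (gB tB : nat -> B), YH_rels d u gB tB n ->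
    (exists f : {lrmorphism A -> B},
        (forall i, (1 <= i < n)%N -> f (g i) = gB i) /\
        (forall i, (1 <= i <= n)%N -> f (t i) = tB i)) /\
    (forall f1 f2 : {lrmorphism A -> B},
        (forall i, (1 <= i < n)%N -> f1 (g i) = gB i) ->
        (forall i, (1 <= i <= n)%N -> f1 (t i) = tB i) ->
        (forall i, (1 <= i < n)%N -> f2 (g i) = gB i) ->
        (forall i, (1 <= i <= n)%N -> f2 (t i) = tB i) ->
        f1 =1 f2).

(* x_s with indices mod d, x_0 = 1; xs provides x_1, ..., x_{d-1}. *)
Definition xmod (d : nat) (xs : nat -> CC) (s : nat) : CC :=
  if (s %% d == 0)%N then 1 else xs (s %% d)%N.

Definition EE (d : nat) (xs : nat -> CC) (m : nat) : CC :=
  (d%:R)^-1 * \sum_(s < d) (xmod d xs (m + s) * xmod d xs (d - s)).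

(* tr, restricted to Y_{d,n} = A, satisfies the defining properties of the
   Markov trace with parameters z, x_1..x_{d-1} (all instances of the
   properties that live inside Y_{d,n}). *)
Definition is_markov_trace (A : algType CC) (d n : nat) (g t : nat -> A)
   (z : CC) (xs : nat -> CC) (tr : {linear A -> CC^o}) : Prop :=
  [/\ (forall a b : A, tr (a * b) = tr (b * a)),
      tr 1 = 1,
      (forall k a, (1 <= k < n)%N -> yh_sub g t k a -> tr (a * g k) = z * tr a) &
      (forall k a s, (k < n)%N -> yh_sub g t k a ->
          tr (a * t k.+1 ^+ s) = xmod d xs s * tr a)].

From mathcomp Require Import Rstruct.
From HB Require Import structures.
From mathcomp Require Import all_boot all_order all_algebra.
From mathcomp Require Import complex.
From mathcomp Require Import zify ring.
Import Order.TTheory GRing.Theory Num.Theory.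
Local Open Scope ring_scope.

(** Expanding e_1^(m) e_2 writes tr(e_1^(m) e_2 g_w) as a d^-2-weighted double
    sum of traces of t_1^p t_2^q t_3^r g_w.  Each such trace is computed by
    pushing the g's past the t's (which permutes the exponents) and applying
    the Markov properties; the only word that needs the quadratic relation is
    g_1 g_2 g_1 = g_2 g_1 g_2.  The resulting double sums depend on the
    exponents only modulo d, and collapse to x_m or to E^(m) after a cyclic
    reindexing of one summation variable. *)

Lemma big_ord_rot1 (R : nmodType) n (F : nat -> R) :
  F n = F 0%N -> \sum_(j < n) F j.+1 = \sum_(j < n) F j.
Proof.
case: n => [|n] FnE; first by rewrite !big_ord0.
by rewrite big_ord_recr big_ord_recl /= FnE addrC.
Qed.

Section CyclicConvolution.
Variables (R : pzSemiRingType) (n : nat) (f h : nat -> R).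
Hypotheses (f_periodic : forall k, f (k + n) = f k)
           (h_periodic : forall k, h (k + n) = h k).

Lemma sum_cyclic_conv a b :
  \sum_(j < n) f (a + (n - j)) * h (b + j) =
  \sum_(j < n) f (n - j) * h (a + b + j).
Proof.
elim: a b => [|a IH] b; first by apply: eq_bigr => j _; rewrite add0n.
rewrite -(@big_ord_rot1 _ n (fun j => f (a.+1 + (n - j)) * h (b + j))); last first.
  by rewrite subnn subn0 !addn0 h_periodic f_periodic.
transitivity (\sum_(j < n) f (a + (n - j)) * h (b.+1 + j)); last by rewrite IH addSnnS.
by apply: eq_bigr => j _; have jn := ltn_ord j; congr (f _ * h _); lia.
Qed.

End CyclicConvolution.

Lemma intertwineX {R : pzSemiRingType} {a b c : R} n :
  a * b = c * a -> a * b ^+ n = c ^+ n * a.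
Proof.
move=> abE; elim: n => [|n IH]; first by rewrite !expr0 mulr1 mul1r.
by rewrite exprS mulrA abE -mulrA IH mulrA -exprS.
Qed.

Section YokonumaHeckeThree.
Variables (A : algType CC) (d : nat) (u : CC) (g t : nat -> A).
Variables (z : CC) (xs : nat -> CC) (tr : {linear A -> CC^o}).
Hypothesis d_gt0 : (0 < d)%N.
Hypothesis t_comm : forall i j, (1 <= i <= 3)%N -> (1 <= j <= 3)%N ->
  t i * t j = t j * t i.
Hypotheses (g1t1 : g 1 * t 1 = t 2 * g 1) (g1t2 : g 1 * t 2 = t 1 * g 1)
  (g1t3 : g 1 * t 3 = t 3 * g 1) (g2t1 : g 2 * t 1 = t 1 * g 2)
  (g2t2 : g 2 * t 2 = t 3 * g 2) (g2t3 : g 2 * t 3 = t 2 * g 2).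
Hypothesis braid : g 2 * g 1 * g 2 = g 1 * g 2 * g 1.
Hypothesis g2_quadratic :
  g 2 ^+ 2 = 1 + (u - 1) *: yh_e d t 2 + (u - 1) *: (yh_e d t 2 * g 2).
Hypothesis trC : forall a b : A, tr (a * b) = tr (b * a).
Hypothesis tr1 : tr 1 = 1.
Hypothesis tr_g : forall k a, (1 <= k < 3)%N -> yh_sub g t k a ->
  tr (a * g k) = z * tr a.
Hypothesis tr_t : forall k a s, (k < 3)%N -> yh_sub g t k a ->
  tr (a * t k.+1 ^+ s) = xmod d xs s * tr a.

Local Notation x := (xmod d xs).

Lemma d_neq0 : (d%:R : CC) != 0.
Proof. by rewrite pnatr_eq0 -lt0n. Qed.

Lemma xmod_eq k n n' : (n = n' + k * d)%N -> x n = x n'.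
Proof. by move=> ->; rewrite /xmod addnC modnMDl. Qed.

Lemma sum_const_ord (c : CC) : \sum_(i < d) c = d%:R * c.
Proof. by rewrite sumr_const card_ord mulr_natl. Qed.

Lemma sum_xmod_conv m a b k : (a + b = m + k * d)%N ->
  \sum_(j < d) x (b + j) * x (a + (d - j)) = d%:R * EE d xs m.
Proof.
move=> abE; rewrite /EE mulrA mulfV ?d_neq0 // mul1r.
have x_periodic n : x (n + d) = x n by apply: (xmod_eq 1); rewrite mul1n.
under eq_bigr do rewrite mulrC.
rewrite sum_cyclic_conv //; apply: eq_bigr => j _.
by rewrite mulrC abE; congr (_ * _); apply: (xmod_eq k); lia.
Qed.

Lemma yh_sub_tX k i n : (1 <= i <= k)%N -> yh_sub g t k (t i ^+ n).
Proof.
move=> ik; elim: n => [|n IH]; first exact: yh_sub1.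
by rewrite exprS; apply: yh_subM => //; exact: yh_subt.
Qed.

Lemma t_commX i j p q : (1 <= i <= 3)%N -> (1 <= j <= 3)%N ->
  t i ^+ p * t j ^+ q = t j ^+ q * t i ^+ p.
Proof. by move=> ? ?; apply/commrX/commr_sym/commrX/t_comm. Qed.

Lemma tr_t1X p : tr (t 1 ^+ p) = x p.
Proof. by rewrite -[t 1 ^+ p]mul1r tr_t // ?tr1 ?mulr1 //; exact: yh_sub1. Qed.

Lemma tr_t1X_t2X p q : tr (t 1 ^+ p * t 2 ^+ q) = x p * x q.
Proof. by rewrite tr_t ?tr_t1X 1?mulrC //; exact: yh_sub_tX. Qed.

Lemma tr_t1X_t2X_g1 p q : tr (t 1 ^+ p * t 2 ^+ q * g 1) = z * x (p + q).
Proof.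
rewrite -mulrA -(intertwineX q g1t1) mulrA trC mulrA -exprD tr_g //.
  by rewrite tr_t1X addnC.
exact: yh_sub_tX.
Qed.

Lemma yh_sub2_t1X_t2X p q : yh_sub g t 2 (t 1 ^+ p * t 2 ^+ q).
Proof. by apply: yh_subM; apply: yh_sub_tX. Qed.

Definition tmon p q r := t 1 ^+ p * t 2 ^+ q * t 3 ^+ r.

Lemma tr_tmon_g1 p q r : tr (tmon p q r * g 1) = z * x (p + q) * x r.
Proof.
rewrite /tmon -mulrA -(intertwineX r g1t3) mulrA tr_t //.
  by rewrite tr_t1X_t2X_g1 mulrC.
by apply: yh_subM; [exact: yh_sub2_t1X_t2X | exact: yh_subg].
Qed.

Lemma t2X_t1X_t2X r p q :
  t 2 ^+ r * t 1 ^+ p * t 2 ^+ q = t 1 ^+ p * t 2 ^+ (q + r).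
Proof. by rewrite (t_commX 2 1) // -mulrA -exprD addnC. Qed.

Lemma tr_tmon_g2 p q r : tr (tmon p q r * g 2) = z * x p * x (q + r).
Proof.
rewrite /tmon -mulrA -(intertwineX r g2t2) mulrA trC !mulrA t2X_t1X_t2X.
by rewrite tr_g ?tr_t1X_t2X ?mulrA //; exact: yh_sub2_t1X_t2X.
Qed.

Lemma tr_tmon_g1g2 p q r : tr (tmon p q r * (g 1 * g 2)) = z ^+ 2 * x (p + q + r).
Proof.
rewrite /tmon -!mulrA (mulrA (t 3 ^+ r)) -(intertwineX r g1t3) -mulrA.
rewrite -(intertwineX r g2t2) !mulrA trC ![in LHS]mulrA t2X_t1X_t2X tr_g //.
  by rewrite tr_t1X_t2X_g1 mulrA addnA.
by apply: yh_subM; [exact: yh_sub2_t1X_t2X | exact: yh_subg].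
Qed.

Lemma g1_tmon p q r : g 1 * tmon p q r = tmon q p r * g 1.
Proof.
rewrite /tmon !mulrA (intertwineX p g1t1) -(mulrA _ (g 1)) (intertwineX q g1t2).
by rewrite mulrA -(mulrA _ (g 1)) (intertwineX r g1t3) mulrA (t_commX 2 1).
Qed.

Lemma g2_tmon p q r : g 2 * tmon p q r = tmon p r q * g 2.
Proof.
rewrite /tmon !mulrA (intertwineX p g2t1) -(mulrA _ (g 2)) (intertwineX q g2t2).
rewrite mulrA -(mulrA _ (g 2)) (intertwineX r g2t3) mulrA -(mulrA _ (t 3 ^+ q)).
by rewrite (t_commX 3 2) // mulrA.
Qed.

Lemma tr_tmon_g2g1 p q r : tr (tmon p q r * (g 2 * g 1)) = z ^+ 2 * x (p + q + r).
Proof. by rewrite mulrA trC mulrA g1_tmon -mulrA tr_tmon_g1g2 (addnC q). Qed.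

Lemma tmon_e2 p q r w : tmon p q r * (yh_e d t 2 * w) =
  (d%:R)^-1 *: \sum_(j < d) tmon p (q + j) (r + (d - j)) * w.
Proof.
rewrite /yh_e -scalerAl -scalerAr mulr_suml mulr_sumr; congr (_ *: _).
apply: eq_bigr => j _; rewrite /tmon !mulrA -(mulrA _ (t 3 ^+ r)) (t_commX 3 2) //.
by rewrite mulrA -(mulrA _ (t 2 ^+ q)) -exprD -(mulrA _ (t 3 ^+ r)) -exprD.
Qed.

Lemma tr_tmon_g1g2g1 p q r : tr (tmon p q r * (g 1 * g 2 * g 1)) =
  z * x (p + r) * x q
  + (u - 1) * z * ((d%:R)^-1 * \sum_(j < d) x (p + r + j) * x (q + (d - j)))
  + (u - 1) * z ^+ 2 * x (p + q + r).
Proof.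
(* Cycling the last g_2 of g_2 g_1 g_2 around the trace produces g_2^2 g_1. *)
rewrite -braid mulrA trC mulrA g2_tmon -mulrA (mulrA (g 2)) -expr2 g2_quadratic.
have := tmon_e2 p r q; move: (yh_e d t 2) => e tmon_e.
rewrite [in LHS]mulrDl [in LHS]mulrDl mul1r -![in LHS]scalerAl -(mulrA e).
rewrite [in LHS]mulrDr [in LHS]mulrDr -![in LHS]scalerAr.
have sum_g2g1 : \sum_(i < d) tr (tmon p (r + i) (q + (d - i)) * (g 2 * g 1)) =
    d%:R * (z ^+ 2 * x (p + q + r)).
  rewrite -sum_const_ord; apply: eq_bigr => i _.
  rewrite tr_tmon_g2g1; congr (_ * _); apply: (xmod_eq 1).
  by have := ltn_ord i; lia.
rewrite [in LHS]linearD [in LHS]linearD ![in LHS]scalarZ !tmon_e ![in LHS]scalarZ.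
rewrite !linear_sum sum_g2g1 mulKf ?d_neq0 // tr_tmon_g1.
under eq_bigr do rewrite tr_tmon_g1 addnA -mulrA.
by rewrite -mulr_sumr; ring.
Qed.

Lemma tr_em1_e2_tmon m w : tr (yh_em d t m 1 * yh_e d t 2 * w) =
  (d%:R)^-1 * ((d%:R)^-1 *
    \sum_(s < d) \sum_(r < d) tr (tmon (m + s) (d - s + r) (d - r) * w)).
Proof.
rewrite /yh_em /yh_e -scalerAl -scalerAr -scalerAl scalarZ -scalerAl scalarZ.
congr (_ * (_ * _)); rewrite mulr_suml mulr_suml linear_sum; apply: eq_bigr => s _.
rewrite mulr_sumr mulr_suml linear_sum; apply: eq_bigr => r _.
by rewrite /tmon (exprD (t 2)) -!mulrA.
Qed.

Lemma mean_double_sum_rows (F : 'I_d -> 'I_d -> CC) c :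
  (forall s, \sum_(r < d) F s r = d%:R * c) ->
  (d%:R)^-1 * ((d%:R)^-1 * \sum_(s < d) \sum_(r < d) F s r) = c.
Proof.
by move=> rowE; rewrite (eq_bigr _ (fun s _ => rowE s)) sum_const_ord !mulKf ?d_neq0.
Qed.

Lemma mean_double_sum_cols (F : 'I_d -> 'I_d -> CC) c :
  (forall r, \sum_(s < d) F s r = d%:R * c) ->
  (d%:R)^-1 * ((d%:R)^-1 * \sum_(s < d) \sum_(r < d) F s r) = c.
Proof. by move=> colE; rewrite exchange_big; exact: mean_double_sum_rows. Qed.

Lemma mean_double_sum_const (F : 'I_d -> 'I_d -> CC) c :
  (forall s r, F s r = c) ->
  (d%:R)^-1 * ((d%:R)^-1 * \sum_(s < d) \sum_(r < d) F s r) = c.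
Proof.
move=> FE; apply: mean_double_sum_rows => s.
by rewrite (eq_bigr _ (fun r _ => FE s r)) sum_const_ord.
Qed.

Lemma tr_em1_e2_g1 m : tr (yh_em d t m 1 * yh_e d t 2 * g 1) = z * EE d xs m.
Proof.
rewrite tr_em1_e2_tmon; apply: mean_double_sum_rows => s.
rewrite mulrCA -(sum_xmod_conv m 0 (m + s + (d - s)) 1); last by have := ltn_ord s; lia.
rewrite mulr_sumr; apply: eq_bigr => r _; rewrite tr_tmon_g1 -mulrA.
by congr (_ * (x _ * x _)); lia.
Qed.

Lemma tr_em1_e2_g2 m : tr (yh_em d t m 1 * yh_e d t 2 * g 2) = z * EE d xs m.
Proof.
rewrite tr_em1_e2_tmon; apply: mean_double_sum_cols => r.
rewrite mulrCA -(sum_xmod_conv m (r + (d - r)) m 1); last by have := ltn_ord r; lia.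
rewrite mulr_sumr; apply: eq_bigr => s _; rewrite tr_tmon_g2 -mulrA.
by congr (_ * (x _ * x _)); lia.
Qed.

Lemma tr_em1_e2_g1g2 m :
  tr (yh_em d t m 1 * yh_e d t 2 * (g 1 * g 2)) = z ^+ 2 * x m.
Proof.
rewrite tr_em1_e2_tmon; apply: mean_double_sum_const => s r.
rewrite tr_tmon_g1g2; congr (_ * _); apply: (xmod_eq 2).
by have := ltn_ord s; have := ltn_ord r; lia.
Qed.

Lemma tr_em1_e2_g2g1 m :
  tr (yh_em d t m 1 * yh_e d t 2 * (g 2 * g 1)) = z ^+ 2 * x m.
Proof.
rewrite tr_em1_e2_tmon; apply: mean_double_sum_const => s r.
rewrite tr_tmon_g2g1; congr (_ * _); apply: (xmod_eq 2).
by have := ltn_ord s; have := ltn_ord r; lia.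
Qed.

Lemma tr_em1_e2_g1g2g1 m :
  tr (yh_em d t m 1 * yh_e d t 2 * (g 1 * g 2 * g 1)) =
  u * z * EE d xs m + (u - 1) * z ^+ 2 * x m.
Proof.
rewrite tr_em1_e2_tmon; apply: mean_double_sum_rows => s.
have s_lt := ltn_ord s.
have rowE (r : 'I_d) :
    tr (tmon (m + s) (d - s + r) (d - r) * (g 1 * g 2 * g 1)) =
    z * x (m + s + (d - r)) * x (d - s + r)
    + ((u - 1) * z * EE d xs m + (u - 1) * z ^+ 2 * x m).
  have r_lt := ltn_ord r.
  rewrite tr_tmon_g1g2g1 (sum_xmod_conv m _ _ 2) ?mulKf ?d_neq0 //; last by lia.
  by rewrite (xmod_eq 2 (m + s + (d - s + r) + (d - r)) m) ?addrA //; lia.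
rewrite (eq_bigr _ (fun r _ => rowE r)) big_split sum_const_ord /=.
have diagE : \sum_(r < d) z * x (m + s + (d - r)) * x (d - s + r) =
    z * (d%:R * EE d xs m).
  rewrite -(sum_xmod_conv m (m + s) (d - s) 1) ?mulr_sumr; last by lia.
  by apply: eq_bigr => r _; rewrite -mulrA (mulrC (x _)).
by rewrite diagE; ring.
Qed.

Lemma tr_em1_e2_g12 m :
  tr (yh_em d t m 1 * yh_e d t 2 * yh_g12 g) =
  (u + 1) * z ^+ 2 * x m + (u + 2) * z * EE d xs m
  + tr (yh_em d t m 1 * yh_e d t 2).
Proof.
rewrite /yh_g12 !mulrDr mulr1 !linearD tr_em1_e2_g1 tr_em1_e2_g2.
by rewrite tr_em1_e2_g1g2 tr_em1_e2_g2g1 tr_em1_e2_g1g2g1; ring.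
Qed.

End YokonumaHeckeThree.

Theorem lemma7 (d : nat) (u : CC) (A : algType CC) (g t : nat -> A)
  (z : CC) (xs : nat -> CC) (tr : {linear A -> CC^o}) :
  (0 < d)%N -> u != 0 ->
  is_YH d u 3 g t ->
  is_markov_trace d 3 g t z xs tr ->
  forall m : nat, (m < d)%N ->
    tr (yh_em d t m 1 * yh_e d t 2 * yh_g12 g) =
      (u + 1) * z ^+ 2 * xmod d xs m + (u + 2) * z * EE d xs m
      + tr (yh_em d t m 1 * yh_e d t 2).
Proof.
move=> d_gt0 _ [[_ [braid [t_comm [_ [g_t g_quadratic]]]]] _] [trC tr1 tr_g tr_t] m _.
have [g1t1 g1t2 /(_ 3%N erefl erefl erefl) g1t3] := g_t 1%N erefl.
have [g2t2 g2t3 /(_ 1%N erefl erefl erefl) g2t1] := g_t 2%N erefl.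
have braid121 := braid 1%N erefl erefl.
have g2_quadratic := g_quadratic 2%N erefl.
by apply: tr_em1_e2_g12.
Qed.
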